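(* Let $F\colon\mathbf{A}\to\mathbf{C}$ be a discrete opfibration and $J\colon\mathbf{A}\to\mathbf{B}$ a cosieve between small categories, and let $\bar F\colon\mathbf{B}\to\mathbf{D}$, $\bar J\colon\mathbf{C}\to\mathbf{D}$ be a pushout of $J$ and $F$ in $\mathbf{Cat}$ (so $\bar F\circ J=\bar J\circ F$). Then $\bar F$ is a discrete opfibration.
   Context: $\mathbf{Cat}$ is the category of small categories and functors. A functor $F\colon\mathbf{A}\to\mathbf{B}$ is a discrete opfibration if for each object $A$ of $\mathbf{A}$ and each morphism $b$ of $\mathbf{B}$ with domain $FA$ there is a unique morphism $a$ of $\mathbf{A}$ with domain $A$ and $Fa=b$. A cosieve is an injective-on-objects discrete opfibration. *)

Record Category := {
  Ob : Type;
  Mor : Type;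
  dom : Mor -> Ob;
  cod : Mor -> Ob;
  idm : Ob -> Mor;
  (* comp g f = g o f; only meaningful when cod f = dom g *)
  comp : Mor -> Mor -> Mor;
  dom_id : forall x, dom (idm x) = x;
  cod_id : forall x, cod (idm x) = x;
  dom_comp : forall f g, cod f = dom g -> dom (comp g f) = dom f;
  cod_comp : forall f g, cod f = dom g -> cod (comp g f) = cod g;
  comp_id_r : forall f, comp f (idm (dom f)) = f;
  comp_id_l : forall f, comp (idm (cod f)) f = f;
  comp_assoc : forall f g h, cod f = dom g -> cod g = dom h ->
    comp h (comp g f) = comp (comp h g) f
}.

Arguments dom {c} _.
Arguments cod {c} _.
Arguments idm {c} _.
Arguments comp {c} _ _.

Record Functor (A B : Category) := {
  fob : Ob A -> Ob B;
  fmor : Mor A -> Mor B;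
  fdom : forall f, dom (fmor f) = fob (dom f);
  fcod : forall f, cod (fmor f) = fob (cod f);
  fid : forall x, fmor (idm x) = idm (fob x);
  fcomp : forall f g, cod f = dom g -> fmor (comp g f) = comp (fmor g) (fmor f)
}.

Arguments fob {A B} _ _.
Arguments fmor {A B} _ _.

Definition fcompose {A B C : Category} (G : Functor B C) (F : Functor A B)
  : Functor A C.
Proof.
  refine {| fob := fun x => fob G (fob F x);
            fmor := fun f => fmor G (fmor F f) |}.
  - intro f. rewrite fdom, fdom. reflexivity.
  - intro f. rewrite fcod, fcod. reflexivity.
  - intro x. rewrite fid, fid. reflexivity.
  - intros f g H. rewrite fcomp by exact H. apply fcomp.
    rewrite fcod, fdom, H. reflexivity.
Defined.

Definition feq {A B : Category} (F G : Functor A B) : Prop :=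
  (forall x, fob F x = fob G x) /\ (forall f, fmor F f = fmor G f).

Definition discrete_opfibration {A B : Category} (F : Functor A B) : Prop :=
  forall (x : Ob A) (b : Mor B), dom b = fob F x ->
    exists! a : Mor A, dom a = x /\ fmor F a = b.

Definition cosieve {A B : Category} (J : Functor A B) : Prop :=
  (forall x y : Ob A, fob J x = fob J y -> x = y) /\ discrete_opfibration J.

Definition is_pushout {A B C D : Category}
  (J : Functor A B) (F : Functor A C) (Fbar : Functor B D) (Jbar : Functor C D)
  : Prop :=
  feq (fcompose Fbar J) (fcompose Jbar F) /\
  forall (E : Category) (G : Functor B E) (H : Functor C E),
    feq (fcompose G J) (fcompose H F) ->
    exists K : Functor D E,
      feq (fcompose K Fbar) G /\ feq (fcompose K Jbar) H /\
      forall K' : Functor D E,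
        feq (fcompose K' Fbar) G -> feq (fcompose K' Jbar) H -> feq K' K.

(* A cosieve J identifies A with a full subcategory of B from which no morphism
   leaves.  Replacing that part of B by C gives an explicit category G: its
   objects are those of C and those of B outside J(A); its morphisms are those
   of C and those of B starting outside J(A), a morphism of B ending at J(a)
   being read as ending at F(a).  Composing such a morphism with a morphism of
   C means lifting the latter along the discrete opfibration F, so every
   morphism of G out of the image of an object of B comes from a unique
   morphism of B: the functor B -> G is a discrete opfibration.  Every cocone
   under J and F factors through G, so the pushout property yields K : D -> G
   and L : G -> D with L K = id, K Fbar = (B -> G) and L (B -> G) = Fbar; a
   morphism of D is then lifted along Fbar by lifting its image under K. *)

From Stdlib Require Import Classical ClassicalEpsilon ProofIrrelevance.

Section OpfibrationLift.
Variables (A B : Category) (P : Functor A B).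

Definition opfib_lift (x : Ob A) (b : Mor B) : Mor A :=
  epsilon (inhabits (idm x)) (fun a => dom a = x /\ fmor P a = b).

Hypothesis HP : discrete_opfibration P.

Lemma opfib_lift_spec x b : dom b = fob P x ->
  dom (opfib_lift x b) = x /\ fmor P (opfib_lift x b) = b.
Proof.
  intro e; unfold opfib_lift; apply epsilon_spec.
  destruct (HP x b e) as [a [Ha _]]; now exists a.
Qed.

Lemma opfib_lift_fmor a : opfib_lift (dom a) (fmor P a) = a.
Proof.
  destruct (HP (dom a) (fmor P a) (fdom _ _ P a)) as [a0 [_ Huniq]].
  transitivity a0; [symmetry | apply Huniq; auto].
  apply Huniq, opfib_lift_spec, fdom.
Qed.

End OpfibrationLift.

Arguments opfib_lift {A B} P x b.

Definition functor_id (X : Category) : Functor X X.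
Proof.
  refine {| fob := fun x => x; fmor := fun f => f |}; reflexivity.
Defined.

Lemma fcompose_feq_trans {B D E D' : Category} (Q : Functor B D) (P : Functor B E)
  (R : Functor B D') (K : Functor D E) (L : Functor E D') :
  feq (fcompose K Q) P -> feq (fcompose L P) R -> feq (fcompose (fcompose L K) Q) R.
Proof.
  intros [KQo KQm] [LPo LPm]; simpl in *.
  split; intro; simpl; [rewrite KQo | rewrite KQm]; auto.
Qed.

Lemma pushout_endo_id {A B C D : Category} (J : Functor A B) (F : Functor A C)
  (Fbar : Functor B D) (Jbar : Functor C D) (M : Functor D D) :
  is_pushout J F Fbar Jbar ->
  feq (fcompose M Fbar) Fbar -> feq (fcompose M Jbar) Jbar ->
  forall d, fmor M d = d.
Proof.
  intros [comm PU] HMF HMJ d.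
  destruct (PU D Fbar Jbar comm) as [K [_ [_ Huniq]]].
  destruct (Huniq M HMF HMJ) as [_ HM].
  destruct (Huniq (functor_id D)) as [_ Hid]; try (split; reflexivity).
  now rewrite HM, <- (Hid d).
Qed.

Lemma discrete_opfibration_retract {B D E : Category}
  (P : Functor B E) (Q : Functor B D) (K : Functor D E) (L : Functor E D) :
  feq (fcompose K Q) P -> feq (fcompose L P) Q ->
  (forall d, fmor L (fmor K d) = d) ->
  discrete_opfibration P -> discrete_opfibration Q.
Proof.
  intros [KQo KQm] [_ LPm] LK HP x d Hd; simpl in *.
  assert (HKd : dom (fmor K d) = fob P x) by (rewrite fdom, Hd; apply KQo).
  destruct (HP x _ HKd) as [a [[Ha HPa] Huniq]].
  exists a; split.
  - split; [exact Ha |]. now rewrite <- LPm, HPa.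
  - intros a' [Ha' HQa']. apply Huniq; split; [exact Ha' |].
    now rewrite <- KQm, HQa'.
Qed.

Section Glue.
Variables (A B C : Category) (F : Functor A C) (J : Functor A B).
Hypothesis HF : discrete_opfibration F.
Hypothesis HJi : forall x y, fob J x = fob J y -> x = y.
Hypothesis HJ : discrete_opfibration J.

Definition inJ (y : Ob B) : Prop := exists a, fob J a = y.

Definition J_preimage (y : Ob B) (h : inJ y) : Ob A :=
  proj1_sig (constructive_indefinite_description _ h).

Lemma J_preimage_spec y h : fob J (J_preimage y h) = y.
Proof. exact (proj2_sig (constructive_indefinite_description _ h)). Qed.

Lemma fmor_J_of_inJ b : inJ (dom b) -> exists a, fmor J a = b.
Proof.
  intros [a0 e]. exists (opfib_lift J a0 b).
  apply opfib_lift_spec; auto.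
Qed.

Definition GOb : Type := Ob C + {y : Ob B | ~ inJ y}.
Definition GMor : Type := Mor C + {b : Mor B | ~ inJ (dom b)}.

Definition gob (y : Ob B) : GOb :=
  match excluded_middle_informative (inJ y) with
  | left h => inl (fob F (J_preimage y h))
  | right h => inr (exist _ y h)
  end.

Definition gmor (b : Mor B) : GMor :=
  match excluded_middle_informative (inJ (dom b)) with
  | left h => inl (fmor F (opfib_lift J (J_preimage _ h) b))
  | right h => inr (exist _ b h)
  end.

Lemma gob_fob a : gob (fob J a) = inl (fob F a).
Proof.
  unfold gob; destruct (excluded_middle_informative _) as [h | h].
  - now rewrite (HJi _ _ (J_preimage_spec _ h)).
  - exfalso; apply h; now exists a.
Qed.

Lemma gob_out y (h : ~ inJ y) : gob y = inr (exist _ y h).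
Proof.
  unfold gob; destruct (excluded_middle_informative _) as [h' | h'].
  - contradiction.
  - do 2 f_equal; apply proof_irrelevance.
Qed.

Lemma gob_inl y c : gob y = inl c -> exists a, fob J a = y /\ fob F a = c.
Proof.
  destruct (classic (inJ y)) as [[a <-] | h].
  - rewrite gob_fob; intro e; injection e; eauto.
  - now rewrite (gob_out y h).
Qed.

Lemma gob_inr y z : gob y = inr z -> y = proj1_sig z.
Proof.
  destruct (classic (inJ y)) as [[a <-] | h].
  - now rewrite gob_fob.
  - rewrite (gob_out y h); intro e; now injection e as <-.
Qed.

Lemma gmor_fmor a : gmor (fmor J a) = inl (fmor F a).
Proof.
  unfold gmor; destruct (excluded_middle_informative _) as [h | h].
  - assert (e : J_preimage _ h = dom a).
    { apply HJi; rewrite J_preimage_spec; apply fdom. }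
    now rewrite e, opfib_lift_fmor.
  - exfalso; apply h; exists (dom a); symmetry; apply fdom.
Qed.

Lemma gmor_out b (h : ~ inJ (dom b)) : gmor b = inr (exist _ b h).
Proof.
  unfold gmor; destruct (excluded_middle_informative _) as [h' | h'].
  - contradiction.
  - do 2 f_equal; apply proof_irrelevance.
Qed.

Definition gdom (g : GMor) : GOb :=
  match g with
  | inl c => inl (dom c)
  | inr b => inr (exist _ (dom (proj1_sig b)) (proj2_sig b))
  end.

Definition gcod (g : GMor) : GOb :=
  match g with
  | inl c => inl (cod c)
  | inr b => gob (cod (proj1_sig b))
  end.

Definition gid (x : GOb) : GMor :=
  match x with
  | inl c => inl (idm c)
  | inr y => gmor (idm (proj1_sig y))
  end.

(* Meaningful only when [gob y = gdom g]; otherwise junk such as [idm y]. *)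
Definition glift (y : Ob B) (g : GMor) : Mor B :=
  match g with
  | inl c =>
      match excluded_middle_informative (inJ y) with
      | left h => fmor J (opfib_lift F (J_preimage y h) c)
      | right _ => idm y
      end
  | inr b => proj1_sig b
  end.

Definition gcomp (g f : GMor) : GMor :=
  match f, g with
  | inl f', inl g' => inl (comp g' f')
  | inl _, inr _ => f
  | inr f', _ => gmor (comp (glift (cod (proj1_sig f')) g) (proj1_sig f'))
  end.

Lemma glift_fob a c : glift (fob J a) (inl c) = fmor J (opfib_lift F a c).
Proof.
  simpl; destruct (excluded_middle_informative _) as [h | h].
  - now rewrite (HJi _ _ (J_preimage_spec _ h)).
  - exfalso; apply h; now exists a.
Qed.

Lemma glift_spec y g : gob y = gdom g ->
  dom (glift y g) = y /\ gob (cod (glift y g)) = gcod g.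
Proof.
  destruct g as [c | [b hb]]; simpl gdom; intro H.
  - destruct (gob_inl _ _ H) as [a [<- Ha]].
    destruct (opfib_lift_spec _ _ F HF a c (eq_sym Ha)) as [Hdom Hmor].
    simpl gcod; rewrite glift_fob, fdom, fcod, Hdom, gob_fob, <- fcod, Hmor.
    now split.
  - apply gob_inr in H; simpl in H; now subst y.
Qed.

Lemma gmor_glift y g : gob y = gdom g -> gmor (glift y g) = g.
Proof.
  destruct g as [c | [b hb]]; simpl gdom; intro H.
  - destruct (gob_inl _ _ H) as [a [<- Ha]].
    destruct (opfib_lift_spec _ _ F HF a c (eq_sym Ha)) as [_ Hmor].
    now rewrite glift_fob, gmor_fmor, Hmor.
  - apply gmor_out.
Qed.

Lemma glift_gmor b : glift (dom b) (gmor b) = b.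
Proof.
  destruct (classic (inJ (dom b))) as [Hb | Hb].
  - destruct (fmor_J_of_inJ b Hb) as [a <-].
    now rewrite gmor_fmor, fdom, glift_fob, opfib_lift_fmor.
  - now rewrite (gmor_out b Hb).
Qed.

Lemma gmor_onto y g : gob y = gdom g -> exists b, dom b = y /\ gmor b = g.
Proof.
  intro H; exists (glift y g); split.
  - apply (glift_spec y g H).
  - now apply gmor_glift.
Qed.

Lemma gdom_gmor b : gdom (gmor b) = gob (dom b).
Proof.
  destruct (classic (inJ (dom b))) as [Hb | Hb].
  - destruct (fmor_J_of_inJ b Hb) as [a <-].
    rewrite gmor_fmor; simpl gdom; now rewrite !fdom, gob_fob.
  - now rewrite (gmor_out b Hb), (gob_out _ Hb).
Qed.

Lemma gcod_gmor b : gcod (gmor b) = gob (cod b).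
Proof.
  destruct (classic (inJ (dom b))) as [Hb | Hb].
  - destruct (fmor_J_of_inJ b Hb) as [a <-].
    rewrite gmor_fmor; simpl gcod; now rewrite !fcod, gob_fob.
  - now rewrite (gmor_out b Hb).
Qed.

Lemma gmor_id y : gmor (idm y) = gid (gob y).
Proof.
  destruct (classic (inJ y)) as [[a <-] | h].
  - now rewrite <- fid, gmor_fmor, gob_fob, fid.
  - now rewrite (gob_out y h).
Qed.

Lemma gmor_comp f g : cod f = dom g -> gmor (comp g f) = gcomp (gmor g) (gmor f).
Proof.
  intro Hfg.
  destruct (classic (inJ (dom f))) as [Hf | Hf].
  - destruct (fmor_J_of_inJ f Hf) as [a <-].
    assert (Hg : inJ (dom g)) by (exists (cod a); now rewrite <- Hfg, fcod).
    destruct (fmor_J_of_inJ g Hg) as [a' <-].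
    assert (Ha : cod a = dom a') by (apply HJi; now rewrite <- fcod, <- fdom).
    now rewrite <- fcomp, !gmor_fmor, fcomp.
  - rewrite (gmor_out f Hf); simpl.
    now rewrite Hfg, glift_gmor.
Qed.

Lemma gdom_gid x : gdom (gid x) = x.
Proof.
  destruct x as [c | [y h]]; simpl.
  - now rewrite dom_id.
  - now rewrite gdom_gmor, dom_id, (gob_out y h).
Qed.

Lemma gcod_gid x : gcod (gid x) = x.
Proof.
  destruct x as [c | [y h]]; simpl.
  - now rewrite cod_id.
  - now rewrite gcod_gmor, cod_id, (gob_out y h).
Qed.

Lemma gdom_gcomp f g : gcod f = gdom g -> gdom (gcomp g f) = gdom f.
Proof.
  destruct f as [f | [b hb]]; intro H.
  - destruct g as [g | g]; simpl in *; try discriminate.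
    injection H as H; now rewrite dom_comp.
  - destruct (glift_spec _ _ H) as [Hdom _]; simpl.
    now rewrite gdom_gmor, dom_comp, (gob_out _ hb).
Qed.

Lemma gcod_gcomp f g : gcod f = gdom g -> gcod (gcomp g f) = gcod g.
Proof.
  destruct f as [f | [b hb]]; intro H.
  - destruct g as [g | g]; simpl in *; try discriminate.
    injection H as H; now rewrite cod_comp.
  - destruct (glift_spec _ _ H) as [Hdom Hcod]; simpl.
    now rewrite gcod_gmor, cod_comp.
Qed.

Lemma gcomp_id_r f : gcomp f (gid (gdom f)) = f.
Proof.
  destruct f as [c | [b hb]].
  - simpl; now rewrite comp_id_r.
  - rewrite <- (gmor_out b hb), gdom_gmor, <- gmor_id, <- gmor_comp by apply cod_id.
    now rewrite comp_id_r.
Qed.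

Lemma gcomp_id_l f : gcomp (gid (gcod f)) f = f.
Proof.
  destruct f as [c | [b hb]].
  - simpl; now rewrite comp_id_l.
  - rewrite <- (gmor_out b hb), gcod_gmor, <- gmor_id, <- gmor_comp
      by (symmetry; apply dom_id).
    now rewrite comp_id_l.
Qed.

Lemma gcomp_assoc f g h : gcod f = gdom g -> gcod g = gdom h ->
  gcomp h (gcomp g f) = gcomp (gcomp h g) f.
Proof.
  intros Hfg Hgh; destruct f as [f | [b hb]].
  - destruct g as [g | g]; simpl in Hfg; try discriminate.
    destruct h as [h | h]; simpl in Hgh; try discriminate.
    injection Hfg as Hfg; injection Hgh as Hgh; simpl.
    now rewrite comp_assoc.
  - rewrite <- (gmor_out b hb) in *.
    rewrite gcod_gmor in Hfg; destruct (gmor_onto _ _ Hfg) as [g' [Hg' <-]].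
    rewrite gcod_gmor in Hgh; destruct (gmor_onto _ _ Hgh) as [h' [Hh' <-]].
    assert (Hbg : cod b = dom g') by auto.
    assert (Hgh' : cod g' = dom h') by auto.
    rewrite <- !gmor_comp by (rewrite ?dom_comp, ?cod_comp; auto).
    now rewrite comp_assoc.
Qed.

Definition Glue : Category :=
  Build_Category GOb GMor gdom gcod gid gcomp gdom_gid gcod_gid
    gdom_gcomp gcod_gcomp gcomp_id_r gcomp_id_l gcomp_assoc.

Definition GlueB : Functor B Glue :=
  Build_Functor B Glue gob gmor gdom_gmor gcod_gmor gmor_id gmor_comp.

Definition GlueC : Functor C Glue.
Proof.
  refine (Build_Functor C Glue inl inl _ _ _ _); reflexivity.
Defined.

Lemma Glue_comm : feq (fcompose GlueB J) (fcompose GlueC F).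
Proof. split; intro; [apply gob_fob | apply gmor_fmor]. Qed.

Lemma GlueB_opfibration : discrete_opfibration GlueB.
Proof.
  intros y g H; simpl in *.
  destruct (gmor_onto y g (eq_sym H)) as [b [Hb Hbg]].
  exists b; split; [now split |].
  intros b' [<- Hb'g]. now rewrite <- (glift_gmor b'), Hb'g, <- Hbg, <- Hb, glift_gmor.
Qed.

Section Copair.
Variables (X : Category) (G : Functor B X) (H : Functor C X).
Hypothesis HGH : feq (fcompose G J) (fcompose H F).

Definition cob (x : GOb) : Ob X :=
  match x with inl c => fob H c | inr y => fob G (proj1_sig y) end.

Definition cmor (g : GMor) : Mor X :=
  match g with inl c => fmor H c | inr b => fmor G (proj1_sig b) end.

Lemma cob_gob y : cob (gob y) = fob G y.
Proof.
  destruct (classic (inJ y)) as [[a <-] | h].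
  - rewrite gob_fob; symmetry; apply (proj1 HGH a).
  - now rewrite (gob_out y h).
Qed.

Lemma cmor_gmor b : cmor (gmor b) = fmor G b.
Proof.
  destruct (classic (inJ (dom b))) as [Hb | Hb].
  - destruct (fmor_J_of_inJ b Hb) as [a <-].
    rewrite gmor_fmor; symmetry; apply (proj2 HGH a).
  - now rewrite (gmor_out b Hb).
Qed.

Lemma cmor_dom g : dom (cmor g) = cob (gdom g).
Proof. destruct g; apply fdom. Qed.

Lemma cmor_cod g : cod (cmor g) = cob (gcod g).
Proof. destruct g; simpl; [| rewrite cob_gob]; apply fcod. Qed.

Lemma cmor_id x : cmor (gid x) = idm (cob x).
Proof. destruct x; simpl; [| rewrite cmor_gmor]; apply fid. Qed.

Lemma cmor_comp f g : gcod f = gdom g -> cmor (gcomp g f) = comp (cmor g) (cmor f).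
Proof.
  destruct f as [f | [b hb]]; intro Hfg.
  - destruct g as [g | g]; simpl in Hfg; try discriminate.
    injection Hfg as Hfg; now apply fcomp.
  - rewrite <- (gmor_out b hb) in *.
    rewrite gcod_gmor in Hfg; destruct (gmor_onto _ _ Hfg) as [g' [Hg' <-]].
    now rewrite <- gmor_comp, !cmor_gmor, fcomp.
Qed.

Definition glue_copair : Functor Glue X :=
  Build_Functor Glue X cob cmor cmor_dom cmor_cod cmor_id cmor_comp.

Lemma glue_copair_B : feq (fcompose glue_copair GlueB) G.
Proof. split; intro; [apply cob_gob | apply cmor_gmor]. Qed.

Lemma glue_copair_C : feq (fcompose glue_copair GlueC) H.
Proof. split; reflexivity. Qed.

End Copair.
End Glue.

Theorem theorem5p2 (A B C D : Category)
  (F : Functor A C) (J : Functor A B)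
  (Fbar : Functor B D) (Jbar : Functor C D) :
  discrete_opfibration F -> cosieve J ->
  is_pushout J F Fbar Jbar ->
  discrete_opfibration Fbar.
Proof.
  intros HF [HJi HJ] HPO.
  pose (P := GlueB A B C F J HF HJi HJ).
  pose (L := glue_copair A B C F J HF HJi HJ D Fbar Jbar (proj1 HPO)).
  assert (HLP : feq (fcompose L P) Fbar) by apply glue_copair_B.
  assert (HLJ : feq (fcompose L (GlueC A B C F J HF HJi HJ)) Jbar)
    by apply glue_copair_C.
  destruct (proj2 HPO _ P _ (Glue_comm A B C F J HF HJi HJ)) as [K [HKP [HKJ _]]].
  apply (discrete_opfibration_retract P Fbar K L HKP HLP).
  - apply (pushout_endo_id J F Fbar Jbar (fcompose L K) HPO).
    + exact (fcompose_feq_trans _ _ _ K L HKP HLP).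
    + exact (fcompose_feq_trans _ _ _ K L HKJ HLJ).
  - apply GlueB_opfibration.
Qed.
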